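(* Let $(S,\mathcal F,\mathcal L)$ be a $p$-local finite group and let $A\le Z(S)$ be $\mathcal F$-weakly closed. Then $\mathrm{Foc}(\mathcal F)=\mathrm{Foc}(N_{\mathcal F}(A))$.
   Context: A subgroup of $S$ is $\mathcal F$-weakly closed if no other subgroup of $S$ is $\mathcal F$-conjugate to it. For $Q\le S$, the normalizer fusion system $N_{\mathcal F}(Q)$ is the fusion system over $N_S(Q)$ with $\mathrm{Hom}_{N_{\mathcal F}(Q)}(P,P')=\{\phi\in\mathrm{Hom}_{\mathcal F}(P,P')\mid \exists\psi\in\mathrm{Hom}_{\mathcal F}(PQ,P'Q),\ \psi|_P=\phi,\ \psi(Q)\le Q\}$. For a fusion system $\mathcal E$ over a $p$-group $T$, the focal subgroup is $\mathrm{Foc}(\mathcal E)=\langle g^{-1}\alpha(g)\mid g\in P\le T,\ \alpha\in\mathrm{Aut}_{\mathcal E}(P)\rangle$. Let $p$ be a prime and $S$ a finite $p$-group. For $P,Q\le S$, $\mathrm{Hom}_S(P,Q)$ is the set of maps $c_g\colon x\mapsto gxg^{-1}$ with $g\in S$, $gPg^{-1}\le Q$, and $\mathrm{Aut}_S(P)=\mathrm{Hom}_S(P,P)$. A fusion system $\mathcal F$ over $S$ is a category whose objects are the subgroups of $S$, with $\mathrm{Hom}_S(P,Q)\subseteq\mathrm{Hom}_{\mathcal F}(P,Q)\subseteq \mathrm{Inj}(P,Q)$, such that every morphism factors as an $\mathcal F$-isomorphism followed by an inclusion. Subgroups are $\mathcal F$-conjugate if they are isomorphic in $\mathcal F$.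 $P$ is fully centralized (resp. fully normalized) if $|C_S(P)|\ge |C_S(P')|$ (resp. $|N_S(P)|\ge|N_S(P')|$) for all $P'$ $\mathcal F$-conjugate to $P$. $\mathcal F$ is saturated if (I) every fully normalized $P$ is fully centralized and $\mathrm{Aut}_S(P)$ is a Sylow $p$-subgroup of $\mathrm{Aut}_{\mathcal F}(P)$, and (II) whenever $\phi\in\mathrm{Hom}_{\mathcal F}(P,S)$ with $\phi(P)$ fully centralized, $\phi$ extends to a morphism in $\mathcal F$ defined on $N_\phi=\{g\in N_S(P):\phi c_g\phi^{-1}\in \mathrm{Aut}_S(\phi(P))\}$. $P$ is $\mathcal F$-centric if $C_S(P')\le P'$ for all $P'$ $\mathcal F$-conjugate to $P$; $\mathcal F^c$ is the full subcategory on these. A centric linking system associated to $\mathcal F$ is a category $\mathcal L$ with objects the $\mathcal F$-centric subgroups, a functor $\pi\colon\mathcal L\to\mathcal F^c$ which is the identity on objects, and monomorphisms $\delta_P\colon P\to\mathrm{Aut}_{\mathcal L}(P)$, such that (A) $Z(P)$ (via $\delta_P$) acts freely on $\mathrm{Mor}_{\mathcal L}(P,Q)$ by composition and $\pi$ induces a bijection $\mathrm{Mor}_{\mathcal L}(P,Q)/Z(P)\to\mathrm{Hom}_{\mathcal F}(P,Q)$; (B) $\pi(\delta_P(g))=c_g$ for $g\in P$; (C) $f\circ\delta_P(g)=\delta_Q(\pi(f)(g))\circ f$ for $f\in\mathrm{Mor}_{\mathcal L}(P,Q)$, $g\in P$. A $p$-local finite group is a triple $(S,\mathcal F,\mathcal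 L)$ with $\mathcal F$ a saturated fusion system over $S$ and $\mathcal L$ an associated centric linking system. *)

From mathcomp Require Import all_boot all_fingroup all_solvable.
Set Implicit Arguments.
Unset Strict Implicit.
Unset Printing Implicit Defensive.
Import GroupScope.
Local Open Scope group_scope.

(* A (candidate) morphism P -> Q is encoded as a finite function
   f : {ffun gT -> gT} normalised to be 1 outside P.
   A fusion system over S is given by F : {set gT} -> {set gT} -> {set {ffun gT -> gT}},
   F P Q = Hom_F(P,Q) (only meaningful for subgroups P, Q of S).
   MathComp conjugation: x ^ y = y^-1 * x * y, so c_g(x) = g x g^-1 = x ^ g^-1. *)

Section Fusion.
Variable gT : finGroupType.
Implicit Types (S P Q R T : {set gT}) (f : {ffun gT -> gT}).

Definition hom_type := {set gT} -> {set gT} -> {set {ffun gT -> gT}}.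

Definition res P (h : gT -> gT) : {ffun gT -> gT} :=
  [ffun x => if x \in P then h x else 1].

Definition HomS S P Q : {set {ffun gT -> gT}} :=
  [set res P (fun x => x ^ g^-1) | g in S & P :^ g^-1 \subset Q].

Definition Inj P Q : {set {ffun gT -> gT}} :=
  [set f : {ffun gT -> gT} | [&& [forall x, (x \notin P) ==> (f x == 1)],
              [forall x in P, forall y in P, f (x * y) == f x * f y],
              [forall x in P, forall y in P, (f x == f y) ==> (x == y)] &
              f @: P \subset Q]].

Definition Fiso (F : hom_type) P Q f :=
  f \in F P Q /\
  exists2 g, g \in F Q P & {in P, forall x, g (f x) = x} /\ {in Q, forall y, f (g y) = y}.

Definition Fconj (F : hom_type) P Q := exists f, Fiso F P Q f.

Definition fusion_system S (F : hom_type) :=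
  [/\ (forall P Q : {group gT}, P \subset S -> Q \subset S ->
         HomS S P Q \subset F P Q /\ F P Q \subset Inj P Q),
      (forall P Q R : {group gT}, P \subset S -> Q \subset S -> R \subset S ->
         forall f g, f \in F P Q -> g \in F Q R -> res P (fun x => g (f x)) \in F P R) &
      (forall P Q : {group gT}, P \subset S -> Q \subset S ->
         forall f, f \in F P Q -> Fiso F P (f @: P) f)].

Definition fully_centralized S (F : hom_type) P :=
  forall P' : {group gT}, P' \subset S -> Fconj F P P' -> #|'C_S(P')| <= #|'C_S(P)|.

Definition fully_normalized S (F : hom_type) P :=
  forall P' : {group gT}, P' \subset S -> Fconj F P P' -> #|'N_S(P')| <= #|'N_S(P)|.

(* automorphisms of P, viewed as permutations of gT (identity off P) *)
Definition toperm P f : {perm gT} :=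
  insubd (1 : {perm gT}) [ffun x => if x \in P then f x else x].

Definition AutF (F : hom_type) P : {set {perm gT}} := [set toperm P f | f in F P P].
Definition AutS S P : {set {perm gT}} := [set toperm P f | f in HomS S P P].

(* N_phi = { g in N_S(P) : phi c_g phi^-1 in Aut_S(phi(P)) } *)
Definition Nphi S P f : {set gT} :=
  [set g in 'N_S(P) | [exists h in S, [forall x in P, f (x ^ g^-1) == (f x) ^ h^-1]]].

Definition saturated (p : nat) S (F : hom_type) :=
  fusion_system S F /\
  (forall P : {group gT}, P \subset S -> fully_normalized S F P ->
     fully_centralized S F P /\ p.-Sylow(AutF F P) (AutS S P)) /\
  (forall P : {group gT}, P \subset S -> forall f, f \in F P S ->
     fully_centralized S F (f @: P) ->
     exists2 g, g \in F (Nphi S P f) S & {in P, forall x, g x = f x}).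

Definition centric S (F : hom_type) P :=
  forall P' : {group gT}, P' \subset S -> Fconj F P P' -> 'C_S(P') \subset P'.

Definition cobj S (F : hom_type) (P : {group gT}) := P \subset S /\ centric S F P.

Record linking_system S (F : hom_type) := LinkingSystem {
  Mor : {set gT} -> {set gT} -> Type;
  comp : forall P Q R, Mor Q R -> Mor P Q -> Mor P R;
  idm : forall P, Mor P P;
  proj : forall P Q, Mor P Q -> {ffun gT -> gT};
  delta : forall P, gT -> Mor P P;
  comp_assoc : forall P Q R T : {group gT}, cobj S F P -> cobj S F Q -> cobj S F R ->
    cobj S F T -> forall (f : Mor P Q) (g : Mor Q R) (h : Mor R T),
    comp h (comp g f) = comp (comp h g) f;
  comp_id_l : forall P Q : {group gT}, cobj S F P -> cobj S F Q ->
    forall f : Mor P Q, comp (idm Q) f = f;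
  comp_id_r : forall P Q : {group gT}, cobj S F P -> cobj S F Q ->
    forall f : Mor P Q, comp f (idm P) = f;
  proj_hom : forall P Q : {group gT}, cobj S F P -> cobj S F Q ->
    forall f : Mor P Q, proj f \in F P Q;
  proj_comp : forall P Q R : {group gT}, cobj S F P -> cobj S F Q -> cobj S F R ->
    forall (f : Mor P Q) (g : Mor Q R),
    proj (comp g f) = res P (fun x => proj g (proj f x));
  proj_id : forall P : {group gT}, cobj S F P -> proj (idm P) = res P id;
  delta1 : forall P : {group gT}, cobj S F P -> delta P 1 = idm P;
  deltaM : forall P : {group gT}, cobj S F P ->
    {in P &, forall x y, delta P (x * y) = comp (delta P x) (delta P y)};
  delta_inj : forall P : {group gT}, cobj S F P -> {in P &, injective (delta P)};
  axA_free : forall P Q : {group gT}, cobj S F P -> cobj S F Q ->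
    forall (f : Mor P Q) z, z \in 'Z(P) -> comp f (delta P z) = f -> z = 1;
  axA_fibres : forall P Q : {group gT}, cobj S F P -> cobj S F Q ->
    forall f g : Mor P Q,
    proj f = proj g <-> exists2 z, z \in 'Z(P) & g = comp f (delta P z);
  axA_surj : forall P Q : {group gT}, cobj S F P -> cobj S F Q ->
    forall h, h \in F P Q -> exists f : Mor P Q, proj f = h;
  axB : forall P : {group gT}, cobj S F P ->
    forall g, g \in P -> proj (delta P g) = res P (fun x => x ^ g^-1);
  axC : forall P Q : {group gT}, cobj S F P -> cobj S F Q ->
    forall (f : Mor P Q) g, g \in P ->
    comp f (delta P g) = comp (delta Q (proj f g)) f
}.

Definition NF (F : hom_type) Q : hom_type := fun P P' =>
  [set f in F P P' | [exists psi in F (P * Q) (P' * Q),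
      [forall x in P, psi x == f x] && (psi @: Q \subset Q)]].

Definition weakly_closed S (F : hom_type) (A : {set gT}) :=
  forall Q : {group gT}, Q \subset S -> Fconj F A Q -> Q :=: A.

Definition Foc T (F : hom_type) : {set gT} :=
  << \bigcup_(P : {group gT} | P \subset T) [set x^-1 * (f : {ffun gT -> gT}) x | f in F P P, x in P] >>.

End Fusion.

From mathcomp Require Import all_boot all_fingroup all_solvable.
From Stdlib Require Import Classical.
From mathcomp Require Import zify.
Import GroupScope.
Set Implicit Arguments. Unset Strict Implicit. Unset Printing Implicit Defensive.

(* Every F-automorphism f of a subgroup P of S already lies in N_F(A).
   Move P by an F-isomorphism chi onto a fully centralized P'.  As A is
   central in S, the extension domain N_phi of any F-morphism phi : P -> P'
   contains PA, so saturation extends both chi and chi o f to F-morphisms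
   Psi, Phi : PA -> P'A; they map A onto F-conjugates of A, i.e. onto A by
   weak closure.  Hence Psi^-1 o Phi is an F-automorphism of PA extending f
   and normalizing A.  Conversely N_S(A) = S and N_F(A) is contained in F. *)

Lemma InjP (gT : finGroupType) (P Q : {set gT}) (f : {ffun gT -> gT}) :
  f \in Inj P Q ->
  [/\ forall x, x \notin P -> f x = 1, {in P &, {morph f : x y / x * y}},
      {in P &, injective f} & f @: P \subset Q].
Proof.
rewrite inE => /and4P [/forallP h1 /forall_inP h2 /forall_inP h3 h4]; split => //.
- by move=> x xP; apply/eqP; apply: (implyP (h1 x)); rewrite xP.
- by move=> x y xP yP; apply/eqP; exact: (forall_inP (h2 x xP) y yP).
- move=> x y xP yP e; apply/eqP.
  exact: (implyP (forall_inP (h3 x xP) y yP)) (introT eqP e).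
Qed.

Lemma resE (gT : finGroupType) (P : {set gT}) h x :
  res P h x = if x \in P then h x else 1.
Proof. by rewrite ffunE. Qed.

Lemma Inj_endo_imset (gT : finGroupType) (P : {set gT}) (f : {ffun gT -> gT}) :
  f \in Inj P P -> f @: P = P.
Proof.
by case/InjP=> _ _ fI sfP; apply/eqP; rewrite eqEcard sfP (card_in_imset fI) leqnn.
Qed.

Section HomOnGroup.

Variables (gT : finGroupType) (G : {group gT}) (f : gT -> gT).
Hypothesis fM : {in G &, {morph f : x y / x * y}}.

Lemma morph_in1 : f 1 = 1.
Proof.
have := fM (group1 G) (group1 G); rewrite mulg1.
by move/(congr1 (mulg (f 1)^-1)); rewrite mulVg mulKg.
Qed.

Lemma morph_inV : {in G, {morph f : x / x^-1}}.
Proof.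
move=> x xG; have := fM xG (groupVr xG); rewrite mulgV morph_in1.
by move/esym/(congr1 (mulg (f x)^-1)); rewrite mulKg mulg1.
Qed.

Lemma imset_group_set : group_set (f @: G).
Proof.
apply/group_setP; split; first by apply/imsetP; exists 1; rewrite ?morph_in1.
move=> _ _ /imsetP[x xG ->] /imsetP[y yG ->]; rewrite -fM //.
by apply: imset_f; rewrite groupM.
Qed.

Lemma imsetM (H K : {set gT}) :
  H \subset G -> K \subset G -> f @: (H * K) = f @: H * f @: K.
Proof.
move=> /subsetP sHG /subsetP sKG; apply/setP=> y; apply/imsetP/mulsgP.
  case=> _ /mulsgP[h k hH kK ->] ->; have [hG kG] := (sHG h hH, sKG k kK).
  by exists (f h) (f k); rewrite ?imset_f // fM.
case=> _ _ /imsetP[h hH ->] /imsetP[k kK ->] ->; have [hG kG] := (sHG h hH, sKG k kK).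
by exists (h * k); rewrite ?mem_mulg // fM.
Qed.

End HomOnGroup.

Section FusionSystem.

Variables (gT : finGroupType) (S : {group gT}) (F : hom_type gT).
Hypothesis fsF : fusion_system S F.
Implicit Types (P Q R : {group gT}) (f g : {ffun gT -> gT}).

Lemma F_Inj P Q f : P \subset S -> Q \subset S -> f \in F P Q -> f \in Inj P Q.
Proof. by case: fsF => homF _ _ sPS sQS; case: (homF P Q sPS sQS) => _ /subsetP; apply. Qed.

Lemma F_comp P Q R f g : P \subset S -> Q \subset S -> R \subset S ->
  f \in F P Q -> g \in F Q R -> res P (fun x => g (f x)) \in F P R.
Proof. by case: fsF => _ compF _ sPS sQS sRS; apply: compF. Qed.

Lemma F_iso P Q f : P \subset S -> Q \subset S -> f \in F P Q -> Fiso F P (f @: P) f.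
Proof. by case: fsF => _ _ isoF sPS sQS; apply: isoF. Qed.

Lemma res_id_F P Q : P \subset Q -> Q \subset S -> res P id \in F P Q.
Proof.
move=> sPQ sQS; case: fsF => homF _ _.
case: (homF P Q (subset_trans sPQ sQS) sQS) => /subsetP sHomSF _; apply: sHomSF.
apply/imsetP; exists 1; first by rewrite inE group1 invg1 conjsg1.
by apply/ffunP=> x; rewrite !resE invg1 conjg1.
Qed.

Lemma F_widen P Q R f : P \subset S -> Q \subset R -> R \subset S ->
  f \in F P Q -> f \in F P R.
Proof.
move=> sPS sQR sRS fPQ; have sQS := subset_trans sQR sRS.
case/InjP: (F_Inj sPS sQS fPQ) => f1 _ _ /subsetP fPsQ.
suff <- : res P (fun x => res Q id (f x)) = f.
  exact: F_comp sPS sQS sRS fPQ (res_id_F sQR sRS).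
apply/ffunP=> x; rewrite !resE.
by case: ifP => xP; [rewrite fPsQ ?imset_f | rewrite f1 ?xP].
Qed.

Lemma F_res P Q R f : P \subset Q -> Q \subset S -> R \subset S ->
  f \in F Q R -> res P f \in F P R.
Proof.
move=> sPQ sQS sRS fQR; have sPS := subset_trans sPQ sQS.
suff <- : res P (fun x => f (res P id x)) = res P f.
  exact: F_comp sPS sQS sRS (res_id_F sPQ sQS) fQR.
by apply/ffunP=> x; rewrite !resE; case: ifP => // ->.
Qed.

Lemma F_corestrict P Q R f : P \subset S -> Q \subset S -> R \subset S ->
  f \in F P R -> f @: P \subset Q -> f \in F P Q.
Proof.
move=> sPS sQS sRS fPR sfPQ; have fI := F_Inj sPS sRS fPR.
case: (F_iso sPS sRS fPR) => fPfP _.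
exact: (F_widen (Q := Group (imset_group_set (let: And4 _ fM _ _ := InjP fI in fM))))
  sPS sfPQ sQS fPfP.
Qed.

Lemma Fiso_imset P Q f : P \subset S -> Q \subset S -> Fiso F P Q f -> f @: P = Q.
Proof.
move=> sPS sQS [fPQ [g gQP [_ fgK]]].
case/InjP: (F_Inj sPS sQS fPQ) => _ _ _ sfPQ.
case/InjP: (F_Inj sQS sPS gQP) => _ _ _ /subsetP sgQP.
apply/eqP; rewrite eqEsubset sfPQ; apply/subsetP=> y yQ.
by rewrite -(fgK y yQ) imset_f ?sgQP ?imset_f.
Qed.

Lemma Fconj_refl P : P \subset S -> Fconj F P P.
Proof.
move=> sPS; have idF := res_id_F (subxx P) sPS.
by exists (res P id); split=> //; exists (res P id) => //; split=> x xP; rewrite !resE xP /= xP.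
Qed.

Lemma Fconj_trans P Q R : P \subset S -> Q \subset S -> R \subset S ->
  Fconj F P Q -> Fconj F Q R -> Fconj F P R.
Proof.
move=> sPS sQS sRS [f [fPQ [f' f'QP [f'K fK]]]] [g [gQR [g' g'RQ [g'K gK]]]].
case/InjP: (F_Inj sPS sQS fPQ) => _ _ _ /subsetP sfPQ.
case/InjP: (F_Inj sQS sRS gQR) => _ _ _ /subsetP sgQR.
case/InjP: (F_Inj sRS sQS g'RQ) => _ _ _ /subsetP sg'RQ.
case/InjP: (F_Inj sQS sPS f'QP) => _ _ _ /subsetP sf'QP.
exists (res P (fun x => g (f x))); split; first exact: F_comp fPQ gQR.
exists (res R (fun x => f' (g' x))); first exact: F_comp g'RQ f'QP.
split=> x xP; rewrite !resE xP.
  by rewrite sgQR ?imset_f ?sfPQ ?imset_f // g'K ?f'K ?sfPQ ?imset_f.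
by rewrite sf'QP ?imset_f ?sg'RQ ?imset_f // fK ?gK ?sg'RQ ?imset_f.
Qed.

(* Induction on #|S| - #|C_S(Q)| along F-conjugates Q of P with growing centralizer. *)
Lemma exists_fully_centralized_Fconj P : P \subset S ->
  exists2 P' : {group gT}, P' \subset S & Fconj F P P' /\ fully_centralized S F P'.
Proof.
move=> sPS; suff: forall n Q, #|S| - #|'C_S(Q)| <= n -> Q \subset S -> Fconj F P Q ->
    exists2 P' : {group gT}, P' \subset S & Fconj F P P' /\ fully_centralized S F P'.
  by apply; [apply: leqnn | exact: sPS | exact: Fconj_refl].
elim=> [|n IHn] Q leSC sQS PQ.
  exists Q => //; split=> // Q' _ _; apply: leq_trans (subset_leq_card (subsetIl S _)) _.
  by rewrite -subn_eq0 -leqn0.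
have [fcQ | nfcQ] := classic (fully_centralized S F Q); first by exists Q.
have [Q' [sQ'S QQ' ltCQQ']] : exists Q' : {group gT},
    [/\ Q' \subset S, Fconj F Q Q' & #|'C_S(Q)| < #|'C_S(Q')|].
  apply: NNPP => noQ'; apply: nfcQ => Q' sQ'S QQ'; rewrite leqNgt.
  by apply/negP => ltCQQ'; apply: noQ'; exists Q'.
apply: (IHn Q') => //; last exact: Fconj_trans PQ QQ'.
have := subset_leq_card (subsetIl S 'C(Q')); lia.
Qed.

End FusionSystem.

Section CentralWeaklyClosed.

Variables (gT : finGroupType) (p : nat) (S A : {group gT}) (F : hom_type gT).
Hypotheses (satF : saturated p S F) (AZ : A \subset 'Z(S)) (wcA : weakly_closed S F A).
Implicit Types (P Q : {group gT}) (f : {ffun gT -> gT}).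

Let fsF : fusion_system S F := proj1 satF.
Let sAS : A \subset S := subset_trans AZ (subsetIl S _).
Let cAS : A \subset 'C(S) := subset_trans AZ (subsetIr S _).

Lemma conjV_central a x : a \in A -> x \in S -> x ^ a^-1 = x.
Proof.
move=> aA xS; have /centP cSa := subsetP cAS a aA.
by rewrite conjgE invgK mulgA cSa ?mulgK.
Qed.

Lemma join_centralE P : P \subset S -> P <*> A = P * A.
Proof. by move=> sPS; apply/comm_joingE/centC; rewrite (subset_trans sPS) // centsC. Qed.

Lemma Nphi_group_set P Q f : f \in Inj P Q -> group_set (Nphi S P f).
Proof.
case/InjP=> _ fM _ _; apply/group_setP; split.
  rewrite inE group1; apply/exists_inP; exists 1 => //.
  by apply/forall_inP=> x _; rewrite !invg1 !conjg1.
move=> g1 g2; rewrite !inE.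
move=> /andP[/andP[g1S g1N] /exists_inP[h1 h1S /forall_inP e1]].
move=> /andP[/andP[g2S g2N] /exists_inP[h2 h2S /forall_inP e2]].
have g12N : g1 * g2 \in 'N(P) by rewrite groupM ?inE.
move: g12N; rewrite inE => -> /=; rewrite groupM //=.
apply/exists_inP; exists (h1 * h2); first by rewrite groupM.
apply/forall_inP=> x xP; rewrite !invMg !conjgM.
have xg2P : x ^ g2^-1 \in P by rewrite memJ_norm ?groupV ?inE.
by rewrite (eqP (e1 _ xg2P)) (eqP (e2 _ xP)).
Qed.

(* P lies in N_phi because phi c_x phi^-1 = c_(phi x); A does because c_a is trivial on S. *)
Lemma join_central_sub_Nphi P f : P \subset S -> f \in F P S ->
  P <*> A \subset Nphi S P f.
Proof.
move=> sPS fPS; have fI := F_Inj fsF sPS (subxx S) fPS.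
case/InjP: (fI) => _ fM _ /subsetP sfPS.
rewrite -[Nphi S P f]/(gval (Group (Nphi_group_set fI))) join_subG.
apply/andP; split; apply/subsetP.
  move=> x xP /=; rewrite !inE (subsetP sPS) //=.
  have := subsetP (normG P) x xP; rewrite inE => -> /=.
  apply/exists_inP; exists (f x); first by rewrite sfPS ?imset_f.
  apply/forall_inP=> y yP.
  by rewrite !conjgE !invgK fM ?groupM ?groupV // fM ?groupV // (morph_inV fM).
move=> a aA /=; rewrite !inE (subsetP sAS) //=.
have : a \in 'N(P) by rewrite (subsetP (cent_sub P)) // (subsetP (centS sPS)) ?(subsetP cAS).
rewrite inE => -> /=; apply/exists_inP; exists 1 => //; apply/forall_inP=> y yP.
by rewrite invg1 conjg1 conjV_central ?(subsetP sPS).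
Qed.

Lemma extend_to_central_join P Q f :
  P \subset S -> Q \subset S -> f \in F P Q -> f @: P = Q -> fully_centralized S F Q ->
  exists psi, [/\ psi \in F (P <*> A) (Q <*> A), {in P, psi =1 f},
                  psi @: A = A & psi @: (P <*> A) = Q <*> A].
Proof.
move=> sPS sQS fPQ fPE fcQ.
have sQAS : Q <*> A \subset S by rewrite join_subG sQS sAS.
have fPS := F_widen fsF sPS sQS (subxx S) fPQ.
have NG := Nphi_group_set (F_Inj fsF sPS (subxx S) fPS).
have sNS : Group NG \subset S by apply/subsetP=> g; rewrite /= !inE => /andP[/andP[]].
have fcfP : fully_centralized S F (f @: P) by rewrite fPE.
have [psi0 psi0F psi0f] := proj2 (proj2 satF) P sPS f fPS fcfP.
have sPAN : P <*> A \subset Group NG := join_central_sub_Nphi sPS fPS.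
have sPAS := subset_trans sPAN sNS.
pose psi := res (P <*> A) psi0.
have psiF : psi \in F (P <*> A) S := F_res fsF sPAN sNS (subxx S) psi0F.
have psif : {in P, psi =1 f} by move=> x xP; rewrite resE mem_gen ?inE ?xP ?psi0f.
case/InjP: (F_Inj fsF sPAS (subxx S) psiF) => _ psiM _ _.
have psiA : psi @: A = A.
  have rhoF : res A psi \in F A S := F_res fsF (joing_subr P A) sPAS (subxx S) psiF.
  case/InjP: (F_Inj fsF sAS (subxx S) rhoF) => _ rhoM _ sAimS.
  have <- : res A psi @: A = psi @: A by apply: eq_in_imset => a aA; rewrite resE aA.
  apply: (wcA (Q := Group (imset_group_set rhoM))) => //.
  by exists (res A psi); exact: (F_iso fsF sAS (subxx S) rhoF).
have psiE : psi @: (P <*> A) = Q <*> A.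
  rewrite !join_centralE // (imsetM psiM) ?joing_subl ?joing_subr // psiA -fPE.
  by congr (_ * _); apply: eq_in_imset.
exists psi; split=> //.
by apply: (F_corestrict fsF sPAS sQAS (subxx S) psiF); rewrite psiE.
Qed.

Lemma AutF_sub_NF P f : P \subset S -> f \in F P P -> f \in NF F A P P.
Proof.
move=> sPS fPP; case/InjP: (F_Inj fsF sPS sPS fPP) => _ _ _ /subsetP sfPP.
have [P' sP'S [[chi chiI] fcP']] := exists_fully_centralized_Fconj fsF sPS.
have chiE := Fiso_imset fsF sPS sP'S chiI; case: chiI => chiF _.
pose phi := res P (fun x => chi (f x)).
have phiF : phi \in F P P' := F_comp fsF sPS sPS sP'S fPP chiF.
have phiE : phi @: P = P'.
  rewrite -chiE -{2}(Inj_endo_imset (F_Inj fsF sPS sPS fPP)) -imset_comp.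
  by apply: eq_in_imset => x xP; rewrite resE xP.
have [Psi [PsiF Psichi PsiA PsiE]] := extend_to_central_join sPS sP'S chiF chiE fcP'.
have [Phi [PhiF Phiphi PhiA _]] := extend_to_central_join sPS sP'S phiF phiE fcP'.
have sPAS : P <*> A \subset S by rewrite join_subG sPS sAS.
have sP'AS : P' <*> A \subset S by rewrite join_subG sP'S sAS.
have [_ [th thF [thPsi _]]] := F_iso fsF sPAS sP'AS PsiF; rewrite PsiE in thF.
have inPA x : x \in P -> x \in P <*> A by apply/subsetP/joing_subl.
have inAPA a : a \in A -> a \in P <*> A by apply/subsetP/joing_subr.
rewrite inE fPP; apply/exists_inP; exists (res (P <*> A) (fun x => th (Phi x))).
  by rewrite -join_centralE //; exact: (F_comp fsF sPAS sP'AS sPAS PhiF thF).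
apply/andP; split.
  apply/forall_inP=> x xP; rewrite resE inPA // Phiphi // resE xP.
  by rewrite -Psichi ?sfPP ?imset_f // thPsi ?inPA ?sfPP ?imset_f.
apply/subsetP=> _ /imsetP[a aA ->]; rewrite resE inAPA //.
have : Phi a \in Psi @: A by rewrite PsiA -{1}PhiA imset_f.
by case/imsetP=> a' a'A ->; rewrite thPsi ?inAPA.
Qed.

End CentralWeaklyClosed.

Theorem proposition4p7 (gT : finGroupType) (p : nat) (S A : {group gT})
    (F : hom_type gT) (L : linking_system S F) :
  prime p -> p.-group S -> saturated p S F ->
  A \subset 'Z(S) -> weakly_closed S F A ->
  Foc S F = Foc 'N_S(A) (NF F A).
Proof.
move=> _ _ satF AZ wcA.
have sSNA : S \subset 'N(A) by rewrite cents_norm // centsC (subset_trans AZ) ?subsetIr.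
apply/eqP; rewrite eqEsubset !gen_subG; apply/andP; split.
  apply/bigcupsP => P sPS; apply/subsetP => _ /imset2P[f x fPP xP ->].
  apply/mem_gen/bigcupP; exists P; first by rewrite subsetI sPS (subset_trans sPS).
  by apply: imset2_f => //; exact: (AutF_sub_NF satF AZ wcA sPS fPP).
apply/bigcupsP => P sPN; apply/subsetP => _ /imset2P[f x fPP xP ->].
apply/mem_gen/bigcupP; exists P; first exact: subset_trans sPN (subsetIl _ _).
by apply: imset2_f => //; move: fPP; rewrite inE => /andP[].
Qed.
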